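(* Let $A\in\mathbb{R}^{m\times n}$, let $\sigma=\|A\|^2$ (squared spectral norm), and let $v\in\mathbb{R}^n$ with $\|v\|=1$. Define $$u=\begin{cases}\dfrac{\sigma v-A^tAv}{\sqrt{\sigma-\|Av\|^2}} & \text{if } v \text{ is not a dominant singular vector of } A,\\[2mm] 0 & \text{otherwise,}\end{cases}$$ and $H=\sigma\mathbf{I}-uu^t$. Then $v^t(H-A^tA)v=0$ and $H\succeq A^tA$.
   Context: $\|\cdot\|$ is the Euclidean norm on vectors and the induced (spectral) norm on matrices, so $\|A\|^2=\lambda_{\max}(A^tA)$. A unit vector $v$ is a dominant singular vector of $A$ if $\|Av\|=\|A\|$ (equivalently, $v$ is an eigenvector of $A^tA$ for its largest eigenvalue); if $v$ is not dominant then $\sigma-\|Av\|^2>0$. $\mathbf I$ is the identity matrix, $M\succeq N$ means $M-N$ is positive semidefinite. *)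

From HB Require Import structures.
From mathcomp Require Import all_boot all_order all_algebra.
From mathcomp Require Import boolp classical_sets reals.
Set Implicit Arguments. Unset Strict Implicit. Unset Printing Implicit Defensive.
Import Order.TTheory GRing.Theory Num.Theory.
Local Open Scope ring_scope.
Local Open Scope classical_set_scope.

Definition vnorm (R : realType) (n : nat) (x : 'cV[R]_n) : R :=
  Num.sqrt (\sum_(i < n) x i 0 ^+ 2).

Definition opnorm (R : realType) (m n : nat) (A : 'M[R]_(m, n)) : R :=
  sup [set r : R | exists x : 'cV[R]_n, vnorm x = 1 /\ r = vnorm (A *m x)].

(* v is a dominant singular vector of A: ||A v|| = ||A|| (v assumed unit). *)
Definition dominant (R : realType) (m n : nat) (A : 'M[R]_(m, n)) (v : 'cV[R]_n) : Prop :=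
  vnorm (A *m v) = opnorm A.

Definition psd (R : realType) (n : nat) (M : 'M[R]_n) : Prop :=
  forall x : 'cV[R]_n, 0 <= (x^T *m M *m x) 0 0.

From mathcomp Require Import all_boot all_order all_algebra.
From mathcomp Require Import boolp classical_sets reals.
From mathcomp Require Import ring lra.
Import Order.TTheory GRing.Theory Num.Theory.
Local Open Scope ring_scope.

(* P := sigma I - A^t A is positive semidefinite because sigma bounds the
   Rayleigh quotient of A^t A.  With u = P v / sqrt(v^t P v), the matrix
   H - A^t A equals P - (P v)(P v)^t / (v^t P v), which annihilates the
   quadratic form at v and is positive semidefinite by the Cauchy-Schwarz
   inequality for the semi-inner product (x, y) |-> x^t P y.  When v is
   dominant, u = 0 and v^t P v = 0 already. *)

Section SpectralGap.
Local Set Implicit Arguments.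
Local Unset Strict Implicit.
Variable R : realType.

Definition sqnorm {n : nat} (x : 'cV[R]_n) : R := (x^T *m x) 0 0.

Definition bform {n : nat} (N : 'M[R]_n) (x y : 'cV[R]_n) : R :=
  (x^T *m N *m y) 0 0.

Lemma sqnorm_sum n (x : 'cV[R]_n) : sqnorm x = \sum_(i < n) x i 0 ^+ 2.
Proof. by rewrite /sqnorm mxE; apply: eq_bigr => i _; rewrite mxE expr2. Qed.

Lemma sqnorm_ge0 n (x : 'cV[R]_n) : 0 <= sqnorm x.
Proof. by rewrite sqnorm_sum; apply: sumr_ge0 => i _; exact: sqr_ge0. Qed.

Lemma sqnorm_eq0 n (x : 'cV[R]_n) : sqnorm x = 0 -> x = 0.
Proof.
rewrite sqnorm_sum => /eqP; rewrite psumr_eq0 => [/allP x0|i _]; last first.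
  exact: sqr_ge0.
apply/matrixP => i j; rewrite (ord1 j) mxE.
by move: (x0 i (mem_index_enum _)); rewrite /= sqrf_eq0 => /eqP.
Qed.

Lemma sqnorm0 n : sqnorm (0 : 'cV[R]_n) = 0.
Proof. by rewrite /sqnorm trmx0 mul0mx mxE. Qed.

Lemma vnorm_ge0 n (x : 'cV[R]_n) : 0 <= vnorm x.
Proof. exact: sqrtr_ge0. Qed.

Lemma vnorm_sqr n (x : 'cV[R]_n) : vnorm x ^+ 2 = sqnorm x.
Proof. by rewrite /vnorm -sqnorm_sum sqr_sqrtr // sqnorm_ge0. Qed.

Lemma vnormZ n (c : R) (x : 'cV[R]_n) : vnorm (c *: x) = `|c| * vnorm x.
Proof.
rewrite /vnorm (eq_bigr (fun i => c ^+ 2 * x i 0 ^+ 2)) => [|i _]; last first.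
  by rewrite mxE exprMn.
by rewrite -mulr_sumr sqrtrM ?sqr_ge0 // sqrtr_sqr.
Qed.

Lemma unit_vector_entry_le1 n (x : 'cV[R]_n) j : vnorm x = 1 -> `|x j 0| <= 1.
Proof.
move=> x1; have : sqnorm x = 1 by rewrite -vnorm_sqr x1 expr1n.
rewrite sqnorm_sum (bigD1 j) //= => sum1.
have rest_ge0 : 0 <= \sum_(i < n | i != j) x i 0 ^+ 2.
  by apply: sumr_ge0 => i _; exact: sqr_ge0.
rewrite -(@ler_pXn2r _ 2) ?nnegrE // real_normK ?num_real // expr1n; lra.
Qed.

(* The unit vector [v] only witnesses that the sup is over a nonempty set. *)
Lemma has_sup_opnorm m n (A : 'M[R]_(m, n)) (v : 'cV[R]_n) : vnorm v = 1 ->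
  has_sup [set r : R | exists x : 'cV[R]_n, vnorm x = 1 /\ r = vnorm (A *m x)].
Proof.
move=> v1; split; first by exists (vnorm (A *m v)); exists v.
exists (1 + \sum_(i < m) (\sum_(j < n) `|A i j|) ^+ 2) => _ [x [x1 ->]].
have lin_le_sqr : vnorm (A *m x) <= 1 + vnorm (A *m x) ^+ 2.
  by have := vnorm_ge0 (A *m x); nra.
apply: (le_trans lin_le_sqr); rewrite lerD2l vnorm_sqr sqnorm_sum.
apply: ler_sum => i _.
have entry_le : `|(A *m x) i 0| <= \sum_(j < n) `|A i j|.
  rewrite mxE; apply: (le_trans (ler_norm_sum _ _ _)); apply: ler_sum => j _.
  rewrite normrM -[leRHS]mulr1; apply: ler_wpM2l => //.
  exact: unit_vector_entry_le1.
rewrite -real_normK ?num_real // ler_pXn2r ?nnegrE //.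
exact: le_trans entry_le.
Qed.

Lemma opnorm_ub m n (A : 'M[R]_(m, n)) (v x : 'cV[R]_n) :
  vnorm v = 1 -> vnorm x = 1 -> vnorm (A *m x) <= opnorm A.
Proof. by move=> v1 x1; apply: (sup_upper_bound (has_sup_opnorm A v1)); exists x. Qed.

Lemma sqnorm_mul_le m n (A : 'M[R]_(m, n)) (v x : 'cV[R]_n) : vnorm v = 1 ->
  sqnorm (A *m x) <= opnorm A ^+ 2 * sqnorm x.
Proof.
move=> v1; have [/sqnorm_eq0 ->|xn0] := eqVneq (sqnorm x) 0.
  by rewrite mulmx0 !sqnorm0 mulr0.
set r := vnorm x.
have r_gt0 : 0 < r by rewrite /r /vnorm -sqnorm_sum sqrtr_gt0 lt_def xn0 sqnorm_ge0.
have xr1 : vnorm (r^-1 *: x) = 1.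
  by rewrite vnormZ ger0_norm ?invr_ge0 ?ltW // mulVf // gt_eqF.
have Ax_le := opnorm_ub A v1 xr1.
have Ax_scale : A *m x = r *: (A *m (r^-1 *: x)).
  by rewrite -scalemxAr scalerA divff ?gt_eqF // scale1r.
rewrite -!vnorm_sqr Ax_scale vnormZ (ger0_norm (ltW r_gt0)) exprMn mulrC.
apply: ler_wpM2r; first exact: sqr_ge0.
by have := vnorm_ge0 (A *m (r^-1 *: x)); nra.
Qed.

Lemma bformDl n (N : 'M[R]_n) x y z : bform N (x + y) z = bform N x z + bform N y z.
Proof. by rewrite /bform linearD /= !mulmxDl mxE. Qed.

Lemma bformZl n (N : 'M[R]_n) c x z : bform N (c *: x) z = c * bform N x z.
Proof. by rewrite /bform linearZ /= -!scalemxAl mxE. Qed.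

Lemma bformDr n (N : 'M[R]_n) x y z : bform N z (x + y) = bform N z x + bform N z y.
Proof. by rewrite /bform !mulmxDr mxE. Qed.

Lemma bformZr n (N : 'M[R]_n) c x z : bform N z (c *: x) = c * bform N z x.
Proof. by rewrite /bform -!scalemxAr mxE. Qed.

Lemma bformB n (N1 N2 : 'M[R]_n) x y :
  bform (N1 - N2) x y = bform N1 x y - bform N2 x y.
Proof. by rewrite /bform mulmxBr mulmxBl !mxE. Qed.

Lemma bformC n (N : 'M[R]_n) x y : N^T = N -> bform N x y = bform N y x.
Proof.
move=> Nsym; rewrite /bform -[in LHS](trmxK (x^T *m N *m y)) [in LHS]mxE.
by rewrite !trmx_mul trmxK Nsym mulmxA.
Qed.

Lemma bform_scalar n (s : R) (x : 'cV[R]_n) : bform s%:M x x = s * sqnorm x.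
Proof. by rewrite /bform /sqnorm mul_mx_scalar -scalemxAl mxE. Qed.

Lemma bform_trmx_mul m n (A : 'M[R]_(m, n)) x :
  bform (A^T *m A) x x = sqnorm (A *m x).
Proof. by rewrite /bform /sqnorm trmx_mul !mulmxA. Qed.

Lemma bformZ n (N : 'M[R]_n) c x y : bform (c *: N) x y = c * bform N x y.
Proof. by rewrite /bform -scalemxAr -scalemxAl mxE. Qed.

Lemma bform_outer_image n (P : 'M[R]_n) (v x : 'cV[R]_n) : P^T = P ->
  bform ((P *m v) *m (P *m v)^T) x x = bform P x v ^+ 2.
Proof.
move=> Psym; rewrite /bform !mulmxA -(mulmxA _ (P *m v)^T) [LHS]mxE big_ord1.
by rewrite trmx_mul Psym -/(bform P v x) (bformC v x Psym) expr2.
Qed.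

Lemma bform_CauchySchwarz n (P : 'M[R]_n) (x v : 'cV[R]_n) :
  P^T = P -> psd P -> 0 < bform P v v ->
  bform P x v ^+ 2 <= bform P x x * bform P v v.
Proof.
move=> Psym Ppsd d_gt0; set a := bform P x x; set b := bform P x v.
set d := bform P v v; set t := - (b / d).
have := Ppsd (x + t *: v); rewrite -/(bform P _ _).
rewrite bformDl !bformDr !bformZl !bformZr (bformC v x Psym) -/a -/b -/d.
have -> : a + t * b + (t * b + t * (t * d)) = (a * d - b ^+ 2) / d.
  by rewrite /t; field; rewrite gt_eqF.
by rewrite pmulr_lge0 ?invr_gt0 // subr_ge0 mulrC.
Qed.

Lemma psd_sub_outer_image n (P : 'M[R]_n) (v : 'cV[R]_n) :
  P^T = P -> psd P -> 0 < bform P v v ->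
  psd (P - (bform P v v)^-1 *: ((P *m v) *m (P *m v)^T)).
Proof.
move=> Psym Ppsd d_gt0 x; rewrite -/(bform _ x x) bformB bformZ.
rewrite bform_outer_image // subr_ge0 ler_pdivrMl // mulrC.
exact: bform_CauchySchwarz.
Qed.

Lemma bform_sub_outer_image n (P : 'M[R]_n) (v : 'cV[R]_n) :
  P^T = P -> bform P v v != 0 ->
  bform (P - (bform P v v)^-1 *: ((P *m v) *m (P *m v)^T)) v v = 0.
Proof.
move=> Psym d_neq0; rewrite bformB bformZ bform_outer_image //.
by rewrite expr2 mulrA mulVf // mul1r subrr.
Qed.

Lemma psd_opnorm_gap m n (A : 'M[R]_(m, n)) (v : 'cV[R]_n) : vnorm v = 1 ->
  psd ((opnorm A ^+ 2)%:M - A^T *m A).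
Proof.
move=> v1 x; rewrite -/(bform _ x x) bformB bform_scalar bform_trmx_mul.
by rewrite subr_ge0 (sqnorm_mul_le A x v1).
Qed.

Lemma mx11_eq0 (M : 'M[R]_1) : M 0 0 = 0 -> M = 0.
Proof. by move=> M00; apply/matrixP => i j; rewrite !ord1 M00 mxE. Qed.

End SpectralGap.

Theorem lemma1 (R : realType) (m n : nat) (A : 'M[R]_(m, n)) (v : 'cV[R]_n)
  (hv : vnorm v = 1) :
  let sigma := opnorm A ^+ 2 in
  let u : 'cV[R]_n :=
    if `[< dominant A v >] then 0
    else (Num.sqrt (sigma - vnorm (A *m v) ^+ 2))^-1 *: (sigma *: v - A^T *m A *m v) in
  let H : 'M[R]_n := sigma%:M - u *m u^T in
  v^T *m (H - A^T *m A) *m v = 0 /\ psd (H - A^T *m A).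
Proof.
move=> sigma u H; set P := sigma%:M - A^T *m A.
have Psym : P^T = P by rewrite /P linearB /= tr_scalar_mx trmx_mul trmxK.
have Ppsd : psd P := psd_opnorm_gap A hv.
have gap : bform P v v = sigma - vnorm (A *m v) ^+ 2.
  by rewrite bformB bform_scalar bform_trmx_mul -!vnorm_sqr hv expr1n mulr1.
have -> : H - A^T *m A = P - u *m u^T by rewrite /H /P addrAC.
have [dom | ndom] := asboolP (dominant A v).
  rewrite /u asboolT // mul0mx subr0; split=> //; apply: mx11_eq0.
  by rewrite -/(bform P v v) gap dom subrr.
have d_gt0 : 0 < bform P v v.
  have opnorm_ge0 := le_trans (vnorm_ge0 _) (opnorm_ub A hv hv).
  rewrite gap subr_gt0 ltr_pXn2r ?nnegrE ?vnorm_ge0 //.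
  by rewrite lt_neqAle (opnorm_ub A hv hv) andbT; apply/eqP.
have -> : u *m u^T = (bform P v v)^-1 *: ((P *m v) *m (P *m v)^T).
  have Pv : P *m v = sigma *: v - A^T *m A *m v by rewrite mulmxBl mul_scalar_mx.
  rewrite /u asboolF // -gap -Pv -scalemxAl linearZ /= -scalemxAr scalerA.
  by rewrite -invfM -expr2 sqr_sqrtr ?ltW.
split; last exact: psd_sub_outer_image.
by apply: mx11_eq0; apply: bform_sub_outer_image; rewrite // gt_eqF.
Qed.
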